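(* Assume $A_n$ satisfies (C1) and (C2), and let $(\beta,B)\in\Theta$. Then $$\limsup_{n\to\infty}\frac1n\,\mathbb E_{n,\beta,B}\Big[\sum_{i=1}^n\Big(m_i(\mathbf X)-\sum_{j=1}^nA_n(i,j)\tanh(\beta m_j(\mathbf X)+B)\Big)\Big]^2<\infty.$$
   Context: For each $n$, $A_n$ is a known symmetric $n\times n$ matrix with non-negative entries and zero diagonal. The Ising model is $\mathbb P_{n,\beta,B}(\mathbf X=\mathbf x)=Z_n(\beta,B)^{-1}\exp(\frac{\beta}{2}\mathbf x^\top A_n\mathbf x+B\sum_i x_i)$ on $\{-1,1\}^n$, with expectation $\mathbb E_{n,\beta,B}$. (C1): there is a constant $\gamma<\infty$ with $\max_{i}\sum_{j}A_n(i,j)\le\gamma$ for all $n$; (C2): $\liminf_n\frac1n\sum_{i,j}A_n(i,j)>0$. $\Theta=\{(\beta,B):\beta>0,B\ne0\}$. $m_i(\mathbf x)=\sum_jA_n(i,j)x_j$. *)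

From Stdlib Require Import Reals Lra Lia Arith.
Open Scope R_scope.

Fixpoint fsum (n : nat) (f : nat -> R) : R :=
  match n with
  | O => 0
  | S m => fsum m f + f m
  end.

(* Configurations x in {-1,1}^n are encoded by naturals k < 2^n:
   x_i = +1 if bit i of k is set, -1 otherwise. This is a bijection
   between {0,..,2^n-1} and {-1,1}^n. *)
Definition spin (k i : nat) : R := if Nat.testbit k i then 1 else -1.

(* A sequence of interaction matrices: A n i j = A_n(i,j) for i,j < n. *)
Definition Mat := nat -> nat -> nat -> R.

Definition valid_matrices (A : Mat) : Prop :=
  forall n, (forall i j, (i < n)%nat -> (j < n)%nat -> A n i j = A n j i) /\
            (forall i j, (i < n)%nat -> (j < n)%nat -> 0 <= A n i j) /\
            (forall i, (i < n)%nat -> A n i i = 0).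

Definition cond_C1 (A : Mat) : Prop :=
  exists gamma : R, forall n i, (i < n)%nat -> fsum n (fun j => A n i j) <= gamma.

(* (C2): liminf_n (1/n) sum_{i,j} A_n(i,j) > 0, i.e. the sequence is
   eventually bounded below by some positive constant. *)
Definition cond_C2 (A : Mat) : Prop :=
  exists c : R, 0 < c /\ exists N : nat, forall n, (N <= n)%nat ->
    c <= / INR n * fsum n (fun i => fsum n (fun j => A n i j)).

Definition mloc (A : Mat) (n k i : nat) : R := fsum n (fun j => A n i j * spin k j).

Definition weight (A : Mat) (n : nat) (beta B : R) (k : nat) : R :=
  exp (beta / 2 * fsum n (fun i => fsum n (fun j => spin k i * A n i j * spin k j))
       + B * fsum n (fun i => spin k i)).

Definition Zn (A : Mat) (n : nat) (beta B : R) : R :=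
  fsum (2 ^ n) (fun k => weight A n beta B k).

Definition Expect (A : Mat) (n : nat) (beta B : R) (f : nat -> R) : R :=
  fsum (2 ^ n) (fun k => weight A n beta B k * f k) / Zn A n beta B.

Definition Qstat (A : Mat) (n : nat) (beta B : R) (k : nat) : R :=
  fsum n (fun i => mloc A n k i
                   - fsum n (fun j => A n i j * tanh (beta * mloc A n k j + B))).

From Stdlib Require Import Reals Lra Lia List Permutation.
Open Scope R_scope.

(* Write Q = sum_l c_l D_l, where c_l = sum_i A(i,l) <= gamma is a column sum and
   D_l = X_l - tanh(beta m_l + B).  Pairing each configuration with the one where
   spin j is flipped shows E[D_j g] = 0 whenever g does not depend on X_j.  For
   l <> j, D_l differs from such a g (replace m_l by m_l - A(l,j) X_j) by at most
   beta A(l,j), since tanh is 1-Lipschitz; hence E[D_j D_l] <= 2 beta A(l,j),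
   while E[D_j^2] <= 4.  Summing, E[Q^2] <= n (4 gamma^2 + 2 beta gamma^3). *)

Lemma fsum_ext n f g : (forall i, (i < n)%nat -> f i = g i) -> fsum n f = fsum n g.
Proof.
  induction n as [|n IH]; intros Hfg; simpl; auto.
  rewrite IH, Hfg; auto; intros; apply Hfg; lia.
Qed.

Lemma fsum_plus n f g : fsum n (fun i => f i + g i) = fsum n f + fsum n g.
Proof. induction n as [|n IH]; simpl; [ring | rewrite IH; ring]. Qed.

Lemma fsum_minus n f g : fsum n (fun i => f i - g i) = fsum n f - fsum n g.
Proof. induction n as [|n IH]; simpl; [ring | rewrite IH; ring]. Qed.

Lemma fsum_scal_l n c f : fsum n (fun i => c * f i) = c * fsum n f.
Proof. induction n as [|n IH]; simpl; [ring | rewrite IH; ring]. Qed.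

Lemma fsum_scal_r n c f : fsum n (fun i => f i * c) = fsum n f * c.
Proof. induction n as [|n IH]; simpl; [ring | rewrite IH; ring]. Qed.

Lemma fsum_const n c : fsum n (fun _ => c) = INR n * c.
Proof. induction n as [|n IH]; simpl fsum; [simpl; ring | rewrite IH, S_INR; ring]. Qed.

Lemma fsum_le n f g : (forall i, (i < n)%nat -> f i <= g i) -> fsum n f <= fsum n g.
Proof.
  induction n as [|n IH]; intros Hfg; simpl; [lra|].
  apply Rplus_le_compat; [apply IH; intros; apply Hfg; lia | apply Hfg; lia].
Qed.

Lemma fsum_nonneg n f : (forall i, (i < n)%nat -> 0 <= f i) -> 0 <= fsum n f.
Proof.
  intros Hf. replace 0 with (fsum n (fun _ => 0)) by (rewrite fsum_const; ring).
  now apply fsum_le.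
Qed.

Lemma fsum_pos n f : (0 < n)%nat -> (forall i, (i < n)%nat -> 0 < f i) -> 0 < fsum n f.
Proof.
  destruct n as [|n]; [lia|]; intros _ Hf; simpl.
  assert (0 <= fsum n f) by (apply fsum_nonneg; intros; left; apply Hf; lia).
  assert (0 < f n) by (apply Hf; lia).
  lra.
Qed.

Lemma fsum_swap n m (f : nat -> nat -> R) :
  fsum n (fun i => fsum m (fun j => f i j)) = fsum m (fun j => fsum n (fun i => f i j)).
Proof.
  induction n as [|n IH]; simpl.
  - rewrite fsum_const; simpl; ring.
  - rewrite IH, <- fsum_plus; reflexivity.
Qed.

Lemma fsum_sqr n f : fsum n f ^ 2 = fsum n (fun j => fsum n (fun l => f j * f l)).
Proof.
  replace (fsum n f ^ 2) with (fsum n f * fsum n f) by ring.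
  rewrite <- fsum_scal_r; apply fsum_ext; intros j _.
  now rewrite <- fsum_scal_l.
Qed.

Lemma fsum_delta n j g : (j < n)%nat ->
  fsum n (fun l => if Nat.eqb l j then g l else 0) = g j.
Proof.
  induction n as [|n IH]; intros Hj; [lia|]; simpl.
  destruct (Nat.eqb_spec n j) as [-> | Hnj].
  - rewrite (fsum_ext j _ (fun _ => 0)), fsum_const; [ring|].
    intros i Hi; destruct (Nat.eqb_spec i j); [lia | auto].
  - rewrite IH by lia; ring.
Qed.

Lemma fsum_update n j f g : (j < n)%nat ->
  (forall i, (i < n)%nat -> i <> j -> g i = f i) -> fsum n g = fsum n f + (g j - f j).
Proof.
  intros Hj Hgf.
  rewrite (fsum_ext n g (fun i => f i + (if Nat.eqb i j then g i - f i else 0))).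
  - now rewrite fsum_plus, fsum_delta.
  - intros i Hi; destruct (Nat.eqb_spec i j) as [-> | Hij]; [ring | rewrite Hgf; auto; ring].
Qed.

Lemma fold_right_Rplus_perm l l' :
  Permutation l l' -> fold_right Rplus 0 l = fold_right Rplus 0 l'.
Proof. induction 1; simpl; lra. Qed.

Lemma fsum_fold_right n f : fsum n f = fold_right Rplus 0 (map f (seq 0 n)).
Proof.
  induction n as [|n IH]; [reflexivity|].
  cbn [fsum]; rewrite seq_S, map_app, fold_right_app, IH; simpl.
  generalize (map f (seq 0 n)); intros l; induction l as [|a l IHl]; simpl; lra.
Qed.

Lemma fsum_reindex_involution N (p : nat -> nat) f :
  (forall k, (k < N)%nat -> (p k < N)%nat) -> (forall k, p (p k) = k) ->
  fsum N (fun k => f (p k)) = fsum N f.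
Proof.
  intros Hp Hpp; rewrite !fsum_fold_right, <- map_map.
  apply fold_right_Rplus_perm, Permutation_map, Permutation_map_same_l.
  - apply FinFun.Injective_map_NoDup; [|apply seq_NoDup].
    intros a b Hab; now rewrite <- (Hpp a), <- (Hpp b), Hab.
  - intros x Hx; apply in_map_iff in Hx as [y [<- Hy]].
    apply in_seq in Hy; apply in_seq; specialize (Hp y); lia.
Qed.

Definition flip (j k : nat) : nat := Nat.lxor k (2 ^ j).

Lemma flip_involutive j k : flip j (flip j k) = k.
Proof. unfold flip; now rewrite Nat.lxor_assoc, Nat.lxor_nilpotent, Nat.lxor_0_r. Qed.

Lemma testbit_flip j k i : Nat.testbit (flip j k) i = xorb (Nat.testbit k i) (Nat.eqb j i).
Proof. unfold flip; now rewrite Nat.lxor_spec, Nat.pow2_bits_eqb. Qed.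

Lemma flip_lt_pow2 n j k : (j < n)%nat -> (k < 2 ^ n)%nat -> (flip j k < 2 ^ n)%nat.
Proof.
  intros Hj Hk.
  replace (flip j k) with (flip j k mod 2 ^ n).
  { apply Nat.mod_upper_bound, Nat.pow_nonzero; lia. }
  apply Nat.bits_inj; intros i; destruct (Nat.lt_ge_cases i n).
  - now rewrite Nat.mod_pow2_bits_low.
  - rewrite Nat.mod_pow2_bits_high, testbit_flip, <- (Nat.mod_small k (2 ^ n)),
      Nat.mod_pow2_bits_high by auto.
    destruct (Nat.eqb_spec j i); [lia | reflexivity].
Qed.

Lemma spin_sign k i : spin k i = 1 \/ spin k i = -1.
Proof. unfold spin; destruct (Nat.testbit k i); auto. Qed.

Lemma spin_flip_same j k : spin (flip j k) j = - spin k j.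
Proof.
  unfold spin; rewrite testbit_flip, Nat.eqb_refl.
  destruct (Nat.testbit k j); simpl; ring.
Qed.

Lemma spin_flip_other j k i : i <> j -> spin (flip j k) i = spin k i.
Proof.
  intros Hij; unfold spin; rewrite testbit_flip.
  destruct (Nat.eqb_spec j i); [lia|]; now rewrite Bool.xorb_false_r.
Qed.

Lemma fsum_spin_flip n j k c : (j < n)%nat ->
  fsum n (fun i => spin (flip j k) i * c i) = fsum n (fun i => spin k i * c i) - 2 * spin k j * c j.
Proof.
  intros Hj; rewrite (fsum_update n j (fun i => spin k i * c i)); auto.
  - rewrite spin_flip_same; ring.
  - intros i _ Hij; now rewrite spin_flip_other.
Qed.

Lemma Rabs_le_inv x a : Rabs x <= a -> - a <= x <= a.
Proof. unfold Rabs; destruct (Rcase_abs x); lra. Qed.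

Lemma cosh_pos x : 0 < cosh x.
Proof. unfold cosh; pose proof (exp_pos x); pose proof (exp_pos (- x)); lra. Qed.

Lemma tanh_bound x : -1 <= tanh x <= 1.
Proof.
  pose proof (cosh_pos x) as Hc.
  assert (Hs : - cosh x <= sinh x <= cosh x).
  { unfold sinh, cosh; pose proof (exp_pos x); pose proof (exp_pos (- x)); lra. }
  unfold tanh, Rdiv; split.
  - apply (Rmult_le_reg_r (cosh x)); auto.
    rewrite Rmult_assoc, Rinv_l; lra.
  - apply (Rmult_le_reg_r (cosh x)); auto.
    rewrite Rmult_assoc, Rinv_l; lra.
Qed.

Lemma derivable_pt_lim_tanh x : derivable_pt_lim tanh x (1 - tanh x ^ 2).
Proof.
  pose proof (cosh_pos x) as Hc.
  replace (1 - tanh x ^ 2) with ((cosh x * cosh x - sinh x * sinh x) / Rsqr (cosh x)).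
  - apply (derivable_pt_lim_div sinh cosh); [apply derivable_pt_lim_sinh | apply derivable_pt_lim_cosh | lra].
  - unfold tanh, Rsqr; field; lra.
Qed.

Lemma tanh_lipschitz a b : Rabs (tanh a - tanh b) <= Rabs (a - b).
Proof.
  destruct (MVT_abs tanh (fun x => 1 - tanh x ^ 2) b a) as [c [Hc _]].
  { intros c _; apply derivable_pt_lim_tanh. }
  rewrite Hc; rewrite <- (Rmult_1_l (Rabs (a - b))) at 2.
  apply Rmult_le_compat_r; [apply Rabs_pos|].
  pose proof (tanh_bound c); apply Rabs_le; nra.
Qed.

Lemma spin_tanh_balance x h : x = 1 \/ x = -1 ->
  (x - tanh h) + exp (-2 * x * h) * (- x - tanh h) = 0.
Proof.
  intros Hx; pose proof (exp_pos h) as Hh.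
  unfold tanh, sinh, cosh; rewrite exp_Ropp.
  destruct Hx as [-> | ->].
  - replace (-2 * 1 * h) with (- h + - h) by ring; rewrite exp_plus, exp_Ropp.
    field; split; nra.
  - replace (-2 * -1 * h) with (h + h) by ring; rewrite exp_plus.
    field; split; nra.
Qed.

Section SpinFlip.

Variables (A : Mat) (n : nat).
Hypothesis A_sym : forall i j, (i < n)%nat -> (j < n)%nat -> A n i j = A n j i.
Hypothesis A_diag : forall i, (i < n)%nat -> A n i i = 0.

Lemma mloc_flip j k i : (j < n)%nat ->
  mloc A n (flip j k) i = mloc A n k i - 2 * A n i j * spin k j.
Proof.
  intros Hj; unfold mloc.
  rewrite !(fsum_ext n (fun l => A n i l * _) (fun l => spin _ l * A n i l)) by (intros; ring).
  rewrite fsum_spin_flip by auto; ring.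
Qed.

Lemma mloc_flip_self j k : (j < n)%nat -> mloc A n (flip j k) j = mloc A n k j.
Proof. intros Hj; rewrite mloc_flip, A_diag by auto; ring. Qed.

Lemma quad_form_mloc k :
  fsum n (fun i => fsum n (fun l => spin k i * A n i l * spin k l)) =
  fsum n (fun i => spin k i * mloc A n k i).
Proof.
  apply fsum_ext; intros i _; unfold mloc; rewrite <- fsum_scal_l.
  apply fsum_ext; intros; ring.
Qed.

Lemma quad_form_flip j k : (j < n)%nat ->
  fsum n (fun i => spin (flip j k) i * mloc A n (flip j k) i) =
  fsum n (fun i => spin k i * mloc A n k i) - 4 * spin k j * mloc A n k j.
Proof.
  intros Hj.
  rewrite (fsum_ext n _ (fun i => spin (flip j k) i * mloc A n k i
                                   + -2 * spin k j * (spin (flip j k) i * A n i j)))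
    by (intros i _; rewrite mloc_flip by auto; ring).
  rewrite fsum_plus, fsum_scal_l, !fsum_spin_flip, A_diag by auto.
  rewrite (fsum_ext n (fun i => spin k i * A n i j) (fun i => A n j i * spin k i))
    by (intros; rewrite A_sym by auto; ring).
  fold (mloc A n k j); ring.
Qed.

Lemma weight_flip beta B j k : (j < n)%nat ->
  weight A n beta B (flip j k) = weight A n beta B k * exp (-2 * spin k j * (beta * mloc A n k j + B)).
Proof.
  intros Hj; unfold weight; rewrite !quad_form_mloc, quad_form_flip, <- exp_plus by auto.
  rewrite (fsum_ext n (fun i => spin (flip j k) i) (fun i => spin (flip j k) i * 1)) by (intros; ring).
  rewrite (fsum_ext n (fun i => spin k i) (fun i => spin k i * 1)) by (intros; ring).
  rewrite fsum_spin_flip by auto; f_equal; field.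
Qed.

End SpinFlip.

Definition wsum (A : Mat) (n : nat) (beta B : R) (f : nat -> R) : R :=
  fsum (2 ^ n) (fun k => weight A n beta B k * f k).

Definition resid (A : Mat) (n : nat) (beta B : R) (j k : nat) : R :=
  spin k j - tanh (beta * mloc A n k j + B).

Definition colsum (A : Mat) (n l : nat) : R := fsum n (fun i => A n i l).

Lemma weight_pos A n beta B k : 0 < weight A n beta B k.
Proof. apply exp_pos. Qed.

Lemma Zn_pos A n beta B : 0 < Zn A n beta B.
Proof.
  apply fsum_pos; [apply Nat.neq_0_lt_0, Nat.pow_nonzero; lia|].
  intros; apply weight_pos.
Qed.

Lemma Expect_le_of_wsum_le A n beta B f M : (0 < n)%nat ->
  wsum A n beta B f <= INR n * M * Zn A n beta B -> / INR n * Expect A n beta B f <= M.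
Proof.
  intros Hn Hf; pose proof (Zn_pos A n beta B); assert (0 < INR n) by (apply lt_0_INR; lia).
  change (Expect A n beta B f) with (wsum A n beta B f / Zn A n beta B).
  apply (Rmult_le_reg_l (INR n * Zn A n beta B)); [nra|].
  replace (INR n * Zn A n beta B * (/ INR n * (wsum A n beta B f / Zn A n beta B)))
    with (wsum A n beta B f) by (field; lra).
  nra.
Qed.

Lemma wsum_le_const A n beta B f c :
  (forall k, f k <= c) -> wsum A n beta B f <= c * Zn A n beta B.
Proof.
  intros Hf; unfold wsum, Zn; rewrite <- fsum_scal_l; apply fsum_le; intros k _.
  pose proof (weight_pos A n beta B k); specialize (Hf k); nra.
Qed.

Lemma wsum_ext A n beta B f g : (forall k, (k < 2 ^ n)%nat -> f k = g k) ->
  wsum A n beta B f = wsum A n beta B g.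
Proof. intros Hfg; unfold wsum; apply fsum_ext; intros; now rewrite Hfg. Qed.

Lemma wsum_plus A n beta B f g :
  wsum A n beta B (fun k => f k + g k) = wsum A n beta B f + wsum A n beta B g.
Proof. unfold wsum; rewrite <- fsum_plus; apply fsum_ext; intros; ring. Qed.

Lemma wsum_scal A n beta B c f :
  wsum A n beta B (fun k => c * f k) = c * wsum A n beta B f.
Proof. unfold wsum; rewrite <- fsum_scal_l; apply fsum_ext; intros; ring. Qed.

Lemma wsum_fsum A n beta B m (h : nat -> nat -> R) :
  wsum A n beta B (fun k => fsum m (fun j => h j k)) = fsum m (fun j => wsum A n beta B (h j)).
Proof.
  unfold wsum; rewrite <- fsum_swap; apply fsum_ext; intros k _.
  now rewrite <- fsum_scal_l.
Qed.

Lemma resid_bound A n beta B j k : -2 <= resid A n beta B j k <= 2.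
Proof.
  unfold resid; pose proof (tanh_bound (beta * mloc A n k j + B)).
  destruct (spin_sign k j) as [-> | ->]; lra.
Qed.

Lemma Qstat_colsum A n beta B k :
  Qstat A n beta B k = fsum n (fun l => colsum A n l * resid A n beta B l k).
Proof.
  unfold Qstat, colsum.
  rewrite (fsum_ext n _ (fun i => fsum n (fun l => A n i l * resid A n beta B l k))).
  - rewrite fsum_swap; apply fsum_ext; intros l _; now rewrite <- fsum_scal_r.
  - intros i _; unfold mloc at 1; rewrite <- fsum_minus.
    apply fsum_ext; intros l _; unfold resid; ring.
Qed.

Section Residuals.

Variables (A : Mat) (n : nat) (beta B : R).
Hypothesis A_sym : forall i j, (i < n)%nat -> (j < n)%nat -> A n i j = A n j i.
Hypothesis A_nonneg : forall i j, (i < n)%nat -> (j < n)%nat -> 0 <= A n i j.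
Hypothesis A_diag : forall i, (i < n)%nat -> A n i i = 0.
Hypothesis beta_pos : 0 < beta.

(* E[X_j - tanh(beta m_j + B) | X_i, i <> j] = 0: pair each configuration with its
   [j]-flip, whose weight differs by the factor exp(-2 X_j (beta m_j + B)). *)
Lemma wsum_resid_orthogonal j g : (j < n)%nat ->
  (forall k, (k < 2 ^ n)%nat -> g (flip j k) = g k) ->
  wsum A n beta B (fun k => resid A n beta B j k * g k) = 0.
Proof.
  intros Hj Hg; unfold wsum.
  set (F := fun k => weight A n beta B k * (resid A n beta B j k * g k)).
  assert (Hpair : forall k, (k < 2 ^ n)%nat -> F k + F (flip j k) = 0).
  { intros k Hk; unfold F, resid.
    rewrite weight_flip, mloc_flip_self, spin_flip_same, Hg by auto.
    transitivity (weight A n beta B k * g k *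
      ((spin k j - tanh (beta * mloc A n k j + B)) + exp (-2 * spin k j * (beta * mloc A n k j + B))
         * (- spin k j - tanh (beta * mloc A n k j + B)))); [ring|].
    rewrite spin_tanh_balance by apply spin_sign; ring. }
  assert (Hflip : fsum (2 ^ n) (fun k => F (flip j k)) = fsum (2 ^ n) F).
  { apply fsum_reindex_involution; [intros; now apply flip_lt_pow2 | apply flip_involutive]. }
  assert (Hsum : fsum (2 ^ n) (fun k => F k + F (flip j k)) = 0).
  { rewrite (fsum_ext _ _ (fun _ => 0)), fsum_const by auto; ring. }
  rewrite fsum_plus, Hflip in Hsum; fold F; lra.
Qed.

Lemma wsum_resid_mul_le j l : (j < n)%nat -> (l < n)%nat ->
  wsum A n beta B (fun k => resid A n beta B j k * resid A n beta B l k) <=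
  ((if Nat.eqb l j then 4 else 0) + 2 * beta * A n l j) * Zn A n beta B.
Proof.
  intros Hj Hl; destruct (Nat.eqb_spec l j) as [-> | Hlj].
  - rewrite A_diag, Rmult_0_r, Rplus_0_r by auto.
    apply wsum_le_const; intros k; pose proof (resid_bound A n beta B j k); nra.
  - (* [shifted k] uses the local field of [l] without the contribution of spin [j],
       so it is invariant under flipping [j]. *)
    set (shifted := fun k => tanh (beta * (mloc A n k l - A n l j * spin k j) + B)).
    rewrite (wsum_ext A n beta B _ (fun k =>
        resid A n beta B j k * (spin k l - shifted k)
        + resid A n beta B j k * (shifted k - tanh (beta * mloc A n k l + B))))
      by (intros; unfold resid at 2; ring).
    rewrite wsum_plus, wsum_resid_orthogonal, Rplus_0_l, Rplus_0_l; auto.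
    + apply wsum_le_const; intros k.
      pose proof (resid_bound A n beta B j k).
      assert (Hd : Rabs (shifted k - tanh (beta * mloc A n k l + B)) <= beta * A n l j).
      { unfold shifted; eapply Rle_trans; [apply tanh_lipschitz|].
        pose proof (A_nonneg l j Hl Hj).
        destruct (spin_sign k j) as [-> | ->]; apply Rabs_le; nra. }
      apply Rabs_le_inv in Hd; nra.
    + intros k _; unfold shifted.
      rewrite spin_flip_other, spin_flip_same, mloc_flip by auto; f_equal; f_equal; f_equal; ring.
Qed.

Variable gamma : R.
Hypothesis colsum_le : forall l, (l < n)%nat -> colsum A n l <= gamma.

Lemma colsum_nonneg l : (l < n)%nat -> 0 <= colsum A n l.
Proof. intros Hl; unfold colsum; apply fsum_nonneg; intros; now apply A_nonneg. Qed.

Lemma colsum_form_le :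
  fsum n (fun j => fsum n (fun l => colsum A n j * colsum A n l *
    ((if Nat.eqb l j then 4 else 0) + 2 * beta * A n l j))) <=
  INR n * (4 * gamma ^ 2 + 2 * beta * gamma ^ 3).
Proof.
  rewrite <- fsum_const; apply fsum_le; intros j Hj.
  rewrite (fsum_ext n _ (fun l => (if Nat.eqb l j then 4 * colsum A n j * colsum A n l else 0)
                                  + 2 * beta * colsum A n j * (colsum A n l * A n l j)))
    by (intros l _; destruct (Nat.eqb l j); ring).
  rewrite fsum_plus, fsum_delta, fsum_scal_l by auto.
  assert (Hinner : fsum n (fun l => colsum A n l * A n l j) <= gamma * colsum A n j).
  { unfold colsum at 2; rewrite <- fsum_scal_l; apply fsum_le; intros l Hl.
    pose proof (colsum_le l Hl); pose proof (A_nonneg l j Hl Hj); nra. }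
  pose proof (colsum_nonneg j Hj); pose proof (colsum_le j Hj).
  set (c := colsum A n j) in *.
  assert (Hsq : c * c <= gamma * gamma) by nra.
  assert (2 * beta * c * fsum n (fun l => colsum A n l * A n l j) <= 2 * beta * c * (gamma * c))
    by (apply Rmult_le_compat_l; nra).
  assert (2 * beta * gamma * (c * c) <= 2 * beta * gamma * (gamma * gamma))
    by (apply Rmult_le_compat_l; nra).
  simpl; nra.
Qed.

Lemma wsum_Qstat_sqr_le :
  wsum A n beta B (fun k => Qstat A n beta B k ^ 2) <=
  INR n * (4 * gamma ^ 2 + 2 * beta * gamma ^ 3) * Zn A n beta B.
Proof.
  rewrite (wsum_ext A n beta B _ (fun k => fsum n (fun j => fsum n (fun l =>
       colsum A n j * colsum A n l * (resid A n beta B j k * resid A n beta B l k)))))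
    by (intros k _; rewrite Qstat_colsum, fsum_sqr; apply fsum_ext; intros j _;
        apply fsum_ext; intros; ring).
  rewrite wsum_fsum.
  rewrite (fsum_ext n _ (fun j => fsum n (fun l => colsum A n j * colsum A n l *
       wsum A n beta B (fun k => resid A n beta B j k * resid A n beta B l k))))
    by (intros j _; rewrite wsum_fsum; apply fsum_ext; intros; apply wsum_scal).
  eapply Rle_trans; [|apply Rmult_le_compat_r; [left; apply Zn_pos | apply colsum_form_le]].
  rewrite <- fsum_scal_r; apply fsum_le; intros j Hj.
  rewrite <- fsum_scal_r; apply fsum_le; intros l Hl.
  rewrite (Rmult_assoc (colsum A n j * colsum A n l)); apply Rmult_le_compat_l.
  - apply Rmult_le_pos; now apply colsum_nonneg.
  - now apply wsum_resid_mul_le.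
Qed.

End Residuals.

Theorem lemma3 (A : Mat) (beta B : R) :
  valid_matrices A -> cond_C1 A -> cond_C2 A -> 0 < beta -> B <> 0 ->
  exists M : R, exists N : nat, forall n, (N <= n)%nat ->
    / INR n * Expect A n beta B (fun k => (Qstat A n beta B k) ^ 2) <= M.
Proof.
  intros HA [gamma Hrow] _ Hbeta _.
  exists (4 * gamma ^ 2 + 2 * beta * gamma ^ 3), 1%nat; intros n Hn.
  destruct (HA n) as [Hsym [Hnonneg Hdiag]].
  assert (Hcol : forall l, (l < n)%nat -> colsum A n l <= gamma).
  { intros l Hl; unfold colsum.
    rewrite (fsum_ext n _ (fun i => A n l i)) by (intros; now apply Hsym).
    now apply Hrow. }
  apply Expect_le_of_wsum_le; [lia|].
  now apply wsum_Qstat_sqr_le.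
Qed.
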